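(* Let $\boldsymbol{Q}$ be a real $(d\times d)$ orthogonal matrix. Then $\boldsymbol{Q}$ can be factorized as $\boldsymbol{Q}=\boldsymbol{P}\boldsymbol{L}\boldsymbol{R}^{-1}$, where $\boldsymbol{P}$ is a $(d\times d)$ permutation matrix and $\boldsymbol{L}$ is a $(d\times d)$ unit lower triangular matrix such that $\boldsymbol{Q}=\boldsymbol{P}\boldsymbol{L}\boldsymbol{U}$ for some $(d\times d)$ upper triangular matrix $\boldsymbol{U}$ (a PLU decomposition of $\boldsymbol{Q}$), and $\boldsymbol{R}$ is the upper triangular matrix in the QR decomposition $\boldsymbol{P}\boldsymbol{L}=\widetilde{\boldsymbol{Q}}\boldsymbol{R}$ of the invertible matrix $\boldsymbol{P}\boldsymbol{L}$ (with $\widetilde{\boldsymbol{Q}}$ orthogonal).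
   Context: A unit lower triangular matrix is a lower triangular matrix with all diagonal entries equal to $1$. The paper uses, as given facts, that every invertible $(d\times d)$ real matrix $\boldsymbol{A}$ admits a PLU decomposition $\boldsymbol{A}=\boldsymbol{P}\boldsymbol{L}\boldsymbol{U}$ ($\boldsymbol{P}$ a permutation matrix, $\boldsymbol{L}$ unit lower triangular, $\boldsymbol{U}$ upper triangular), and a QR decomposition $\boldsymbol{A}=\boldsymbol{Q}\boldsymbol{R}$ with $\boldsymbol{Q}$ orthogonal and $\boldsymbol{R}$ upper triangular, which the paper takes to be unique. *)

From HB Require Import structures.
From mathcomp Require Import all_boot all_order all_algebra all_fingroup.
From mathcomp Require Import reals.
Set Implicit Arguments. Unset Strict Implicit. Unset Printing Implicit Defensive.
Import Order.TTheory GRing.Theory Num.Theory.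
Local Open Scope ring_scope.

Definition orthogonal_mx (R : realType) (d : nat) (Q : 'M[R]_d) : Prop :=
  Q^T *m Q = 1%:M /\ Q *m Q^T = 1%:M.

Definition perm_matrix (R : realType) (d : nat) (P : 'M[R]_d) : Prop :=
  exists s : 'S_d, P = perm_mx s.

Definition unit_lower_tri (R : realType) (d : nat) (L : 'M[R]_d) : Prop :=
  (forall i j : 'I_d, (i < j)%N -> L i j = 0) /\ (forall i : 'I_d, L i i = 1).

Definition upper_tri (R : realType) (d : nat) (U : 'M[R]_d) : Prop :=
  forall i j : 'I_d, (j < i)%N -> U i j = 0.

From HB Require Import structures.
From mathcomp Require Import all_boot all_order all_algebra all_fingroup.
From mathcomp Require Import reals.
Set Implicit Arguments. Unset Strict Implicit. Unset Printing Implicit Defensive.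
Import Order.TTheory GRing.Theory Num.Theory.
Local Open Scope ring_scope.

(* Take a PLU decomposition Q = P L U.  Then P L = Q U^-1, and since the
   inverse of an invertible upper triangular matrix is upper triangular,
   Qt := Q, R := U^-1 is a QR decomposition of P L, with Q = P L R^-1. *)

Lemma trig_mx_diag_neq0 (F : fieldType) n (A : 'M[F]_n) (i : 'I_n) :
  is_trig_mx A -> A \in unitmx -> A i i != 0.
Proof.
move=> Atrig; rewrite unitmxE det_trig // unitfE prodf_seq_neq0.
by move=> /allP /(_ i (mem_index_enum _)).
Qed.

Lemma trig_mx_invmx (F : fieldType) n (A : 'M[F]_n) :
  is_trig_mx A -> A \in unitmx -> is_trig_mx (invmx A).
Proof.
move=> Atrig Aunit; have /is_trig_mxP A0 := Atrig.
have AV : A *m invmx A = 1%:M by rewrite mulmxV.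
apply/is_trig_mxP; suff V0 k (i : 'I_n) : i = k :> nat -> forall j : 'I_n,
    (i < j)%N -> invmx A i j = 0 by move=> i; exact: V0.
(* Entry (i, j) of A A^-1 = 1 for i < j: the terms k < i vanish by induction
   on the row, those k > i by triangularity, leaving A i i * A^-1 i j = 0. *)
elim/ltn_ind: k i => k IH i ik j ltij; subst k.
have := congr1 (fun M : 'M[F]_n => M i j) AV.
rewrite !mxE (bigD1 i) //= big1 => [|k /negbTE nki]; last first.
  case: (ltngtP k i) => [ltki|ltik|/val_inj eki]; last by rewrite eki eqxx in nki.
  - by rewrite (IH k) ?mulr0 // (ltn_trans ltki ltij).
  - by rewrite A0 ?mul0r.
have /negbTE -> : i != j by rewrite -val_eqE /= ltn_eqF.
rewrite addr0 => /eqP.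
by rewrite mulf_eq0 (negbTE (trig_mx_diag_neq0 i Atrig Aunit)) => /eqP.
Qed.

Lemma upper_triE (R : realType) d (U : 'M[R]_d) : upper_tri U <-> is_trig_mx U^T.
Proof.
split=> [Uup | /is_trig_mxP UT0 i j ltji].
  by apply/is_trig_mxP => i j ltij; rewrite mxE Uup.
by have := UT0 j i ltji; rewrite mxE.
Qed.

Lemma upper_tri_invmx (R : realType) d (U : 'M[R]_d) :
  upper_tri U -> U \in unitmx -> upper_tri (invmx U).
Proof.
rewrite !upper_triE -unitmx_tr trmx_inv; exact: trig_mx_invmx.
Qed.

Lemma plu_decomposition (R : realType) d (A : 'M[R]_d) :
  exists P L U : 'M[R]_d,
    [/\ perm_matrix P, unit_lower_tri L, upper_tri U & A = P *m L *m U].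
Proof.
case: d A => [|n] A.
  exists 1%:M, 1%:M, A; split; last by rewrite !flatmx0.
  - by exists 1%g; rewrite perm_mx1.
  - by split=> [[]|[]].
  - by move=> [].
have Lup := @cormen_lup_lower _ _ A; have Uup := @cormen_lup_upper _ _ A.
move: (cormen_lup_perm A) (cormen_lup_correct A) Lup Uup.
case: cormen_lup => [[P L] U] /= /is_perm_mxP [s ->] PA Lup Uup.
exists (perm_mx s^-1), L, U; split.
- by exists s^-1%g.
- split=> [i j ltij | i]; last by rewrite Lup // eqxx.
  by rewrite Lup ?(ltnW ltij) // -val_eqE /= ltn_eqF.
- exact: Uup.
- by rewrite -mulmxA -[L *m U]PA mulmxA -perm_mxM mulVg perm_mx1 mul1mx.
Qed.

Theorem theorem1 (R : realType) (d : nat) (Q : 'M[R]_d) :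
  orthogonal_mx Q ->
  exists (P L U : 'M[R]_d),
    [/\ perm_matrix P, unit_lower_tri L, upper_tri U & Q = P *m L *m U] /\
    exists (Qt Rr : 'M[R]_d),
      [/\ orthogonal_mx Qt, upper_tri Rr, Rr \in unitmx, P *m L = Qt *m Rr
        & Q = P *m L *m invmx Rr].
Proof.
move=> Qorth; have [P [L [U [Pperm Llow Uup QE]]]] := plu_decomposition Q.
have Qunit : Q \in unitmx by case: (mulmx1_unit Qorth.1).
have Uunit : U \in unitmx by move: Qunit; rewrite QE unitmx_mul => /andP[].
exists P, L, U; split=> //.
exists Q, (invmx U); split=> //.
- exact: upper_tri_invmx.
- by rewrite unitmx_inv.
- by rewrite QE mulmxK.
- by rewrite invmxK.
Qed.
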